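(* Let $(a,b,c)\in\mathcal{I}:=\{(a,b,c)\in[0,1]^3 : a\le b,\ c\le b\}$. Then $(a',b',c'):=\varphi(a,b,c)\in\mathcal{I}$ and $\psi(\mathcal{S}_{a,b,c})\subset\mathcal{S}_{a',b',c'}$, where $$\varphi(a,b,c):=\left(\Big(\frac{1+b}{1+2b}\Big)^d,\ \Big(\frac{1+a+ac}{1+2a}\Big)^d,\ b^d\Big(\frac{1+c+c^2}{1+b+bc}\Big)^d\right).$$
   Context: Fix an integer $d\ge2$. For a probability distribution $z=(z_i)_{i\in\mathbb{Z}}$ on $\mathbb{Z}$ set $A(z)_i=(z_{i-1}+z_i+z_{i+1})^d$ and $F(z)=A(z)/\sum_{i\in\mathbb{Z}}A(z)_i$. Let $\mathcal{E}$ be the set of probability distributions $z$ on $\mathbb{Z}$ that are symmetric ($z_i=z_{-i}$) and whose support is an interval of $\mathbb{Z}$ or all of $\mathbb{Z}$. Define $\mathsf R\colon\mathcal{E}\to[0,\infty)^{\{1,2,\dots\}}$ by $\mathsf R(z)_i=z_i/z_{i-1}$ if $z_{i-1}\neq0$ and $\mathsf R(z)_i=0$ otherwise ($i\ge1$); $\mathsf R$ is injective on $\mathcal{E}$, and $\mathcal{R}:=\mathsf R(\mathcal{E})$. $F$ maps $\mathcal{E}$ to $\mathcal{E}$, and $\psi:=\mathsf R\circ F\circ\mathsf R^{-1}\colon\mathcal{R}\to\mathcal{R}$. Explicitly, writing $\psi_n(x)=\psi(x)_n$: $\psi_1(x)=\big(\frac{1+x_1+x_1x_2}{1+2x_1}\big)^d$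 and $\psi_n(x)=x_{n-1}^d\big(\frac{1+x_n+x_nx_{n+1}}{1+x_{n-1}+x_{n-1}x_n}\big)^d$ for $n\ge2$. For reals $a,b,c$, $\mathcal{S}_{a,b,c}:=\{x\in\mathcal{R}: a\le x_1\le b,\ 0\le x_n\le c\text{ for all }n\ge2\}$. *)

From Stdlib Require Import Reals Lra ZArith.
From Coquelicot Require Import Coquelicot.
Open Scope R_scope.

(* A probability distribution on Z: nonnegative weights summing to 1.
   For nonnegative terms, sum_{i in Z} z_i = z_0 + sum_{n>=1} (z_n + z_{-n}). *)
Definition is_prob_Z (z : Z -> R) : Prop :=
  (forall i, 0 <= z i) /\
  is_series (fun n : nat => if (n =? 0)%nat then z 0%Z
                            else z (Z.of_nat n) + z (- Z.of_nat n)%Z) 1.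

Definition symmetric_Z (z : Z -> R) : Prop := forall i, z i = z (- i)%Z.

Definition support_interval (z : Z -> R) : Prop :=
  forall i j k : Z, (i <= j <= k)%Z -> z i <> 0 -> z k <> 0 -> z j <> 0.

Definition inE (z : Z -> R) : Prop :=
  is_prob_Z z /\ symmetric_Z z /\ support_interval z.

(* Ratio map R : E -> [0,oo)^{1,2,...}.  Sequences indexed by {1,2,...} are
   represented as nat -> R, index 0 being a dummy coordinate fixed to 0. *)
Definition Rmap (z : Z -> R) : nat -> R := fun n =>
  match n with
  | O => 0
  | S _ => if Req_EM_T (z (Z.of_nat n - 1)%Z) 0 then 0
           else z (Z.of_nat n) / z (Z.of_nat n - 1)%Z
  end.

Definition inRR (x : nat -> R) : Prop := exists z, inE z /\ Rmap z = x.

(* psi = R o F o R^{-1}, in its explicit form *)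
Definition psi (d : nat) (x : nat -> R) : nat -> R := fun n =>
  match n with
  | O => 0
  | 1%nat => ((1 + x 1%nat + x 1%nat * x 2%nat) / (1 + 2 * x 1%nat)) ^ d
  | S m => x m ^ d *
           ((1 + x n + x n * x (S n)) / (1 + x m + x m * x n)) ^ d
  end.

Definition inS (a b c : R) (x : nat -> R) : Prop :=
  inRR x /\ a <= x 1%nat <= b /\ (forall n, (2 <= n)%nat -> 0 <= x n <= c).

Definition inI (a b c : R) : Prop :=
  0 <= a <= 1 /\ 0 <= b <= 1 /\ 0 <= c <= 1 /\ a <= b /\ c <= b.

Definition phi1 (d : nat) (a b c : R) : R := ((1 + b) / (1 + 2 * b)) ^ d.
Definition phi2 (d : nat) (a b c : R) : R := ((1 + a + a * c) / (1 + 2 * a)) ^ d.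
Definition phi3 (d : nat) (a b c : R) : R :=
  b ^ d * ((1 + c + c ^ 2) / (1 + b + b * c)) ^ d.

From Stdlib Require Import Reals Lra Lia ZArith FunctionalExtensionality.
From Coquelicot Require Import Coquelicot.
Open Scope R_scope.

(* The coordinate bounds follow from the monotonicity of the rational functions
   defining psi in each of their arguments.  For the membership of psi x in the
   ratio set, write x = R z and note that z_(m+1) = z_m x_(m+1) for every m >= 0,
   also outside the support of z.  Hence z_(m-1) + z_m + z_(m+1) equals
   z_(m-1) (1 + x_m + x_m x_(m+1)) for m >= 1, so R (F z) = psi (R z) by direct computation;
   F z lies in E because the window sums of z inherit symmetry, summability and
   interval support from z. *)

Lemma Rdiv_le_cross (p q r s : R) :
  0 < q -> 0 < s -> p * s <= r * q -> p / q <= r / s.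
Proof.
  intros Hq Hs H. apply Rmult_le_reg_r with (q * s); [nra|].
  replace (p / q * (q * s)) with (p * s) by (field; lra).
  replace (r / s * (q * s)) with (r * q) by (field; lra).
  exact H.
Qed.

Lemma inI_pow (d : nat) (a b c : R) : inI a b c -> inI (a ^ d) (b ^ d) (c ^ d).
Proof.
  intros (Ha & Hb & Hc & Hab & Hcb).
  assert (Hunit : forall t, 0 <= t <= 1 -> 0 <= t ^ d <= 1).
  { intros t Ht. split; [apply pow_le; lra|]. rewrite <- (pow1 d). apply pow_incr; lra. }
  repeat split; try apply Hunit; auto; apply pow_incr; lra.
Qed.

Lemma head_ratio_lb (b t s : R) :
  0 <= t <= b -> 0 <= s -> (1 + b) / (1 + 2 * b) <= (1 + t + t * s) / (1 + 2 * t).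
Proof.
  intros Ht Hs. apply Rdiv_le_cross; [lra|lra|].
  assert (0 <= t * s * (1 + 2 * b)) by (apply Rmult_le_pos; nra). nra.
Qed.

Lemma head_ratio_ub (a c t s : R) :
  0 <= a <= t -> 0 <= s <= c -> c <= 1 ->
  (1 + t + t * s) / (1 + 2 * t) <= (1 + a + a * c) / (1 + 2 * a).
Proof.
  intros Hat Hsc Hc. apply Rdiv_le_cross; [lra|lra|].
  assert (0 <= (t - a) * (1 - s)) by (apply Rmult_le_pos; lra).
  assert (0 <= a * (c - s)) by (apply Rmult_le_pos; lra).
  assert (0 <= a * t * (c - s)) by (apply Rmult_le_pos; nra).
  nra.
Qed.

Lemma tail_ratio_ub (b c t s r : R) :
  0 <= t <= b -> 0 <= s <= c -> 0 <= r <= c -> c <= 1 ->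
  t * ((1 + s + s * r) / (1 + t + t * s)) <= b * ((1 + c + c * c) / (1 + b + b * c)).
Proof.
  intros Ht Hs Hr Hc.
  assert (Hmono_t : t / (1 + t + t * s) <= b / (1 + b + b * s))
    by (apply Rdiv_le_cross; nra).
  assert (Hmono_s : (1 + s + s * c) / (1 + b + b * s) <= (1 + c + c * c) / (1 + b + b * c)).
  { apply Rdiv_le_cross; [nra|nra|].
    assert (0 <= (c - s) * (1 + c + b * c)) by (apply Rmult_le_pos; nra). nra. }
  replace (t * ((1 + s + s * r) / (1 + t + t * s)))
    with (t / (1 + t + t * s) * (1 + s + s * r)) by (field; nra).
  apply Rle_trans with (b / (1 + b + b * s) * (1 + s + s * c)).
  - apply Rmult_le_compat; [apply Rdiv_le_0_compat; nra | nra | exact Hmono_t | nra].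
  - replace (b / (1 + b + b * s) * (1 + s + s * c))
      with (b * ((1 + s + s * c) / (1 + b + b * s))) by (field; nra).
    apply Rmult_le_compat_l; lra.
Qed.

Lemma phi3_eq (d : nat) (a b c : R) :
  phi3 d a b c = (b * ((1 + c + c * c) / (1 + b + b * c))) ^ d.
Proof. unfold phi3. rewrite Rpow_mult_distr. do 3 f_equal. ring. Qed.

Lemma phi_inI (d : nat) (a b c : R) :
  inI a b c -> inI (phi1 d a b c) (phi2 d a b c) (phi3 d a b c).
Proof.
  intros (Ha & Hb & Hc & Hab & Hcb). unfold phi1, phi2. rewrite phi3_eq. apply inI_pow.
  assert (H1 : 0 <= (1 + b) / (1 + 2 * b) <= 1).
  { split; [apply Rdiv_le_0_compat; lra | rewrite <- Rdiv_le_1; lra]. }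
  assert (H2 : (1 + a + a * c) / (1 + 2 * a) <= 1) by (rewrite <- Rdiv_le_1; nra).
  assert (H12 : (1 + b) / (1 + 2 * b) <= (1 + a + a * c) / (1 + 2 * a))
    by (apply head_ratio_lb; lra).
  assert (H3 : 0 <= b * ((1 + c + c * c) / (1 + b + b * c)))
    by (apply Rmult_le_pos; [lra | apply Rdiv_le_0_compat; nra]).
  assert (H32 : b * ((1 + c + c * c) / (1 + b + b * c)) <= (1 + a + a * c) / (1 + 2 * a)).
  { apply Rle_trans with ((1 + b + b * c) / (1 + 2 * b)); [|apply head_ratio_ub; lra].
    replace (b * ((1 + c + c * c) / (1 + b + b * c)))
      with (b * (1 + c + c * c) / (1 + b + b * c)) by (field; nra).
    apply Rdiv_le_cross; [nra|lra|].
    (* (1 + b + bc)^2 - b (1 + c + c^2)(1 + 2b) = (1 - b^2 c^2) + b (1 - b) + b c (1 - c) *)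
    assert (0 <= b * c <= 1) by (split; nra).
    assert (0 <= b * (1 - b)) by (apply Rmult_le_pos; lra).
    assert (0 <= b * c * (1 - c)) by (apply Rmult_le_pos; nra).
    nra. }
  repeat split; lra.
Qed.

Lemma psi_bounds (d : nat) (a b c : R) (x : nat -> R) :
  inI a b c -> a <= x 1%nat <= b -> (forall n, (2 <= n)%nat -> 0 <= x n <= c) ->
  phi1 d a b c <= psi d x 1 <= phi2 d a b c /\
  (forall n, (2 <= n)%nat -> 0 <= psi d x n <= phi3 d a b c).
Proof.
  intros (Ha & Hb & Hc & Hab & Hcb) Hx1 Hx.
  assert (Hx2 := Hx 2%nat ltac:(lia)).
  split.
  - unfold phi1, phi2, psi.
    split; apply pow_incr; split.
    + apply Rdiv_le_0_compat; lra.
    + apply head_ratio_lb; lra.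
    + apply Rdiv_le_0_compat; nra.
    + apply head_ratio_ub; lra.
  - intros [|[|k]] Hn; try lia.
    assert (Hk : 0 <= x (S k) <= b).
    { destruct k; [lra|]. assert (H := Hx (S (S k)) ltac:(lia)). lra. }
    assert (Hk1 := Hx (S (S k)) ltac:(lia)). assert (Hk2 := Hx (S (S (S k))) ltac:(lia)).
    unfold psi. rewrite <- Rpow_mult_distr, phi3_eq.
    assert (0 <= x (S k) * ((1 + x (S (S k)) + x (S (S k)) * x (S (S (S k))))
                           / (1 + x (S k) + x (S k) * x (S (S k)))))
      by (apply Rmult_le_pos; [lra | apply Rdiv_le_0_compat; nra]).
    split; [apply pow_le; assumption|].
    apply pow_incr. split; [assumption|]. apply tail_ratio_ub; lra.
Qed.

Definition Zfold (f : Z -> R) (n : nat) : R :=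
  if (n =? 0)%nat then f 0%Z else f (Z.of_nat n) + f (- Z.of_nat n)%Z.

Definition window (z : Z -> R) (i : Z) : R := z (i - 1)%Z + z i + z (i + 1)%Z.

Definition Amap (d : nat) (z : Z -> R) (i : Z) : R := window z i ^ d.

Definition Fmap (d : nat) (z : Z -> R) (i : Z) : R :=
  Amap d z i / Series (Zfold (Amap d z)).

Lemma is_series_term_le (a : nat -> R) (l : R) (n : nat) :
  is_series a l -> (forall k, 0 <= a k) -> a n <= l.
Proof.
  intros Ha Hpos. apply is_series_Reals in Ha.
  apply Rle_trans with (sum_f_R0 a n).
  - destruct n as [|n]; simpl; [lra|].
    assert (0 <= sum_f_R0 a n) by (apply cond_pos_sum; auto). specialize (Hpos (S n)). lra.
  - apply sum_incr; auto.
Qed.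

Lemma ex_series_pow (u : nat -> R) (M : R) (k : nat) :
  (forall n, 0 <= u n <= M) -> ex_series u -> ex_series (fun n => u n ^ S k).
Proof.
  intros Hu Hex.
  apply (@ex_series_le R_AbsRing R_CompleteNormedModule) with (fun n => scal (M ^ k) (u n)).
  - intros n. specialize (Hu n). change (norm (u n ^ S k)) with (Rabs (u n ^ S k)).
    rewrite Rabs_pos_eq by (apply pow_le; lra).
    simpl. rewrite Rmult_comm. apply Rmult_le_compat_r; [lra|]. apply pow_incr. lra.
  - apply (@ex_series_scal R_AbsRing R_NormedModule). exact Hex.
Qed.

Lemma is_series_Zfold_scal (f : Z -> R) (c l : R) :
  is_series (Zfold f) l -> is_series (Zfold (fun i => f i * c)) (l * c).
Proof.
  intros H. apply (is_series_scal_r c) in H. revert H. apply is_series_ext.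
  intros n. unfold Zfold. destruct (n =? 0)%nat; [reflexivity | apply Rmult_plus_distr_r].
Qed.

Section Folding.

Variable f : Z -> R.
Hypothesis f_ge0 : forall i, 0 <= f i.
Hypothesis f_sym : symmetric_Z f.

Lemma Zfold_ge0 (n : nat) : 0 <= Zfold f n.
Proof.
  unfold Zfold. destruct (n =? 0)%nat; [apply f_ge0|].
  generalize (f_ge0 (Z.of_nat n)) (f_ge0 (- Z.of_nat n)); lra.
Qed.

Lemma Zfold_bounds (n : nat) : f (Z.of_nat n) <= Zfold f n <= 2 * f (Z.of_nat n).
Proof.
  unfold Zfold. destruct (n =? 0)%nat eqn:E.
  - apply Nat.eqb_eq in E. subst n. generalize (f_ge0 0%Z). simpl. lra.
  - rewrite <- f_sym. generalize (f_ge0 (Z.of_nat n)). lra.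
Qed.

Lemma ex_series_Zfold : ex_series (Zfold f) <-> ex_series (fun n => f (Z.of_nat n)).
Proof.
  split; intros Hex.
  - apply (@ex_series_le R_AbsRing R_CompleteNormedModule) with (Zfold f); [|exact Hex].
    intros n. change norm with Rabs. rewrite Rabs_pos_eq by apply f_ge0. apply Zfold_bounds.
  - apply (@ex_series_le R_AbsRing R_CompleteNormedModule)
      with (fun n => scal 2 (f (Z.of_nat n))).
    + intros n. change norm with Rabs. rewrite Rabs_pos_eq by apply Zfold_ge0. apply Zfold_bounds.
    + apply (@ex_series_scal R_AbsRing R_NormedModule). exact Hex.
Qed.

End Folding.

Lemma support_interval_ext (f g : Z -> R) :
  (forall i, f i = 0 <-> g i = 0) -> support_interval f -> support_interval g.
Proof.
  intros Hfg Hf i j k Hijk Hi Hk Hj.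
  apply (Hf i j k Hijk); rewrite Hfg; assumption.
Qed.

Lemma window_sym (z : Z -> R) : symmetric_Z z -> symmetric_Z (window z).
Proof.
  intros Hz i. unfold window. rewrite (Hz (i - 1)%Z), (Hz i), (Hz (i + 1)%Z).
  replace (- (i - 1))%Z with (- i + 1)%Z by lia.
  replace (- (i + 1))%Z with (- i - 1)%Z by lia. ring.
Qed.

Lemma window_eq0 (z : Z -> R) (i : Z) : (forall j, 0 <= z j) ->
  window z i = 0 <-> z (i - 1)%Z = 0 /\ z i = 0 /\ z (i + 1)%Z = 0.
Proof.
  intros Hz. unfold window. generalize (Hz (i - 1)%Z) (Hz i) (Hz (i + 1)%Z). lra.
Qed.

Lemma support_interval_window (z : Z -> R) :
  (forall j, 0 <= z j) -> support_interval z -> support_interval (window z).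
Proof.
  intros Hz Hint i j k Hijk Hi Hk Hj.
  apply (window_eq0 z j Hz) in Hj as (Hj1 & Hj & Hj2).
  assert (Hnear : forall l, window z l <> 0 -> exists p, (l - 1 <= p <= l + 1)%Z /\ z p <> 0).
  { intros l Hl. destruct (Req_dec (z (l - 1)%Z) 0); [|exists (l - 1)%Z; split; [lia|auto]].
    destruct (Req_dec (z l) 0); [|exists l; split; [lia|auto]].
    destruct (Req_dec (z (l + 1)%Z) 0); [|exists (l + 1)%Z; split; [lia|auto]].
    exfalso. apply Hl, window_eq0; auto. }
  destruct (Hnear i Hi) as (p & Hp & Hzp). destruct (Hnear k Hk) as (q & Hq & Hzq).
  destruct (Z.eq_dec p (j + 1)) as [->|Hpj]; [contradiction|].
  destruct (Z.eq_dec q (j - 1)) as [->|Hqj]; [contradiction|].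
  exact (Hint p j q ltac:(lia) Hzp Hzq Hj).
Qed.

Lemma ex_series_window (z : Z -> R) :
  ex_series (fun n => z (Z.of_nat n)) -> ex_series (fun n => window z (Z.of_nat n)).
Proof.
  intros Hz. apply (@ex_series_incr_1 R_AbsRing R_NormedModule).
  assert (H1 := proj1 (@ex_series_incr_1 R_AbsRing R_NormedModule _) Hz).
  assert (H2 := proj1 (@ex_series_incr_1 R_AbsRing R_NormedModule _) H1).
  apply ex_series_ext with (fun n => plus (plus (z (Z.of_nat n)) (z (Z.of_nat (S n))))
                                           (z (Z.of_nat (S (S n))))).
  - intros n. unfold window.
    replace (Z.of_nat (S n) - 1)%Z with (Z.of_nat n) by lia.
    replace (Z.of_nat (S n) + 1)%Z with (Z.of_nat (S (S n))) by lia. reflexivity.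
  - apply (@ex_series_plus R_AbsRing R_NormedModule); [|exact H2].
    apply (@ex_series_plus R_AbsRing R_NormedModule); assumption.
Qed.

Lemma Rmap_S (f : Z -> R) (m : nat) :
  Rmap f (S m) = if Req_EM_T (f (Z.of_nat m)) 0 then 0
                 else f (Z.of_nat (S m)) / f (Z.of_nat m).
Proof. unfold Rmap. replace (Z.of_nat (S m) - 1)%Z with (Z.of_nat m) by lia. reflexivity. Qed.

Lemma Rmap_ge0 (f : Z -> R) (n : nat) : (forall i, 0 <= f i) -> 0 <= Rmap f n.
Proof.
  intros Hf. destruct n as [|m]; [simpl; lra|]. rewrite Rmap_S.
  destruct Req_EM_T; [lra|]. apply Rdiv_le_0_compat; [apply Hf|].
  generalize (Hf (Z.of_nat m)). lra.
Qed.

Section Realization.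

Variable z : Z -> R.
Hypothesis z_ge0 : forall i, 0 <= z i.
Hypothesis z_series : is_series (Zfold z) 1.
Hypothesis z_sym : symmetric_Z z.
Hypothesis z_interval : support_interval z.

Lemma z_le1 (i : Z) : z i <= 1.
Proof.
  assert (Hi : z i = z (Z.of_nat (Z.abs_nat i))).
  { rewrite Zabs2Nat.id_abs. destruct (Z.abs_spec i) as [[_ ->]|[_ ->]]; [reflexivity|apply z_sym]. }
  rewrite Hi. apply Rle_trans with (Zfold z (Z.abs_nat i)).
  - apply Zfold_bounds; assumption.
  - apply is_series_term_le with (1 := z_series). apply Zfold_ge0. exact z_ge0.
Qed.

Lemma z0_pos : 0 < z 0%Z.
Proof.
  destruct (Req_dec (z 0%Z) 0) as [H0|H0]; [|generalize (z_ge0 0%Z); lra].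
  (* The support is a symmetric interval avoiding 0, hence empty *)
  assert (Hzero : forall i, z i = 0).
  { intros i. destruct (Req_dec (z i) 0) as [|Hi]; [assumption|]. exfalso.
    assert (Hmi : z (- i)%Z <> 0) by (rewrite <- z_sym; exact Hi).
    destruct (Z_le_gt_dec i 0).
    - exact (z_interval i 0%Z (- i)%Z ltac:(lia) Hi Hmi H0).
    - exact (z_interval (- i)%Z 0%Z i ltac:(lia) Hmi Hi H0). }
  assert (H := is_series_unique _ _ z_series).
  rewrite (Series_ext _ (fun _ => 0 * 0)), Series_scal_l in H; [lra|].
  intros n. unfold Zfold. destruct (n =? 0)%nat; rewrite !Hzero; ring.
Qed.

Lemma z_tail (m n : nat) : z (Z.of_nat m) = 0 -> (m <= n)%nat -> z (Z.of_nat n) = 0.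
Proof.
  intros Hm Hmn. destruct (Req_dec (z (Z.of_nat n)) 0) as [|Hn]; [assumption|]. exfalso.
  apply (z_interval 0%Z (Z.of_nat m) (Z.of_nat n)); [lia | generalize z0_pos; lra | exact Hn | exact Hm].
Qed.

(* Holds also outside the support, where both sides vanish. *)
Lemma z_succ_Rmap (m : nat) : z (Z.of_nat (S m)) = z (Z.of_nat m) * Rmap z (S m).
Proof.
  rewrite Rmap_S. destruct Req_EM_T as [Hm|Hm].
  - rewrite Rmult_0_r. apply (z_tail m); [exact Hm | lia].
  - field. exact Hm.
Qed.

Lemma window_succ (k : nat) :
  window z (Z.of_nat (S k)) =
  z (Z.of_nat k) * (1 + Rmap z (S k) + Rmap z (S k) * Rmap z (S (S k))).
Proof.
  unfold window.
  replace (Z.of_nat (S k) - 1)%Z with (Z.of_nat k) by lia.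
  replace (Z.of_nat (S k) + 1)%Z with (Z.of_nat (S (S k))) by lia.
  rewrite (z_succ_Rmap (S k)), (z_succ_Rmap k). ring.
Qed.

Lemma window_0 : window z 0 = z 0%Z * (1 + 2 * Rmap z 1).
Proof.
  unfold window. change (0 - 1)%Z with (-1)%Z. change (0 + 1)%Z with (Z.of_nat 1).
  rewrite (z_sym (-1)%Z). change (- -1)%Z with (Z.of_nat 1).
  rewrite (z_succ_Rmap 0). change (Z.of_nat 0) with 0%Z. ring.
Qed.

Variable d : nat.
Hypothesis d_pos : (0 < d)%nat.

Lemma Amap_ge0 (i : Z) : 0 <= Amap d z i.
Proof. apply pow_le. unfold window. generalize (z_ge0 (i - 1)) (z_ge0 i) (z_ge0 (i + 1)). lra. Qed.

Lemma ex_series_Amap : ex_series (Zfold (Amap d z)).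
Proof.
  apply ex_series_Zfold; [exact Amap_ge0 | intros i; unfold Amap; rewrite window_sym; auto |].
  replace d with (S (pred d)) by lia.
  apply ex_series_pow with 3.
  - intros n. unfold window. 
    generalize (z_ge0 (Z.of_nat n - 1)) (z_ge0 (Z.of_nat n)) (z_ge0 (Z.of_nat n + 1))
      (z_le1 (Z.of_nat n - 1)) (z_le1 (Z.of_nat n)) (z_le1 (Z.of_nat n + 1)). lra.
  - apply ex_series_window, ex_series_Zfold; auto. eexists. exact z_series.
Qed.

Lemma Amap_total_pos : 0 < Series (Zfold (Amap d z)).
Proof.
  apply Rlt_le_trans with (Zfold (Amap d z) 0).
  - unfold Zfold, Amap. simpl. rewrite window_0. apply pow_lt.
    generalize z0_pos (Rmap_ge0 z 1 z_ge0). nra.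
  - apply is_series_term_le with (1 := Series_correct _ ex_series_Amap).
    apply Zfold_ge0, Amap_ge0.
Qed.

Lemma Fmap_eq0 (i : Z) : Fmap d z i = 0 <-> window z i = 0.
Proof.
  assert (Hpos := Amap_total_pos). unfold Fmap.
  set (T := Series (Zfold (Amap d z))) in *. unfold Amap. split.
  - intros H. destruct (Req_dec (window z i) 0) as [|Hw]; [assumption|]. exfalso.
    apply (pow_nonzero _ d) in Hw. apply Hw.
    replace (window z i ^ d) with (window z i ^ d / T * T) by (field; lra).
    rewrite H. ring.
  - intros ->. rewrite pow_i by exact d_pos. unfold Rdiv. ring.
Qed.

Lemma Fmap_ratio (i j : Z) :
  window z j <> 0 -> Fmap d z i / Fmap d z j = (window z i / window z j) ^ d.
Proof.
  intros Hj. assert (Hpos := Amap_total_pos). assert (Hjd := pow_nonzero _ d Hj).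
  unfold Fmap. set (T := Series (Zfold (Amap d z))) in *. unfold Amap.
  unfold Rdiv at 4. rewrite Rpow_mult_distr, pow_inv. field. lra.
Qed.

Lemma Fmap_inE : inE (Fmap d z).
Proof.
  assert (Hpos := Amap_total_pos).
  split; [split|split].
  - intros i. apply Rdiv_le_0_compat; [apply Amap_ge0 | exact Hpos].
  - change (is_series (Zfold (fun i => Amap d z i * / Series (Zfold (Amap d z)))) 1).
    replace 1 with (Series (Zfold (Amap d z)) * / Series (Zfold (Amap d z))) by (field; lra).
    apply is_series_Zfold_scal, Series_correct, ex_series_Amap.
  - intros i. unfold Fmap, Amap. rewrite (window_sym z z_sym i). reflexivity.
  - apply (support_interval_ext (window z)).
    + intros i. symmetry. apply Fmap_eq0.
    + apply support_interval_window; assumption.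
Qed.

Lemma Rmap_Fmap : Rmap (Fmap d z) = psi d (Rmap z).
Proof.
  extensionality n. destruct n as [|[|k]]; [reflexivity| |]; rewrite Rmap_S; unfold psi.
  - change (Z.of_nat 0) with 0%Z.
    assert (Hx := Rmap_ge0 z 1 z_ge0). assert (Hz0 := z0_pos).
    assert (Hw : window z 0 <> 0) by (rewrite window_0; nra).
    destruct Req_EM_T as [H|_]; [apply Fmap_eq0 in H; contradiction|].
    rewrite Fmap_ratio by exact Hw. rewrite (window_succ 0), window_0.
    change (Z.of_nat 0) with 0%Z. f_equal. field. lra.
  - assert (Hx := Rmap_ge0 z (S k) z_ge0). assert (Hy := Rmap_ge0 z (S (S k)) z_ge0).
    destruct (Req_dec (z (Z.of_nat k)) 0) as [Hk|Hk].
    + assert (Hw : Fmap d z (Z.of_nat (S k)) = 0)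
        by (apply Fmap_eq0; rewrite window_succ, Hk; ring).
      destruct Req_EM_T as [_|]; [|contradiction].
      rewrite Rmap_S. destruct Req_EM_T; [|contradiction].
      rewrite pow_i by exact d_pos. ring.
    + assert (Hw : window z (Z.of_nat (S k)) <> 0)
        by (rewrite window_succ; apply Rmult_integral_contrapositive; split; nra).
      destruct Req_EM_T as [H|_]; [apply Fmap_eq0 in H; contradiction|].
      rewrite Fmap_ratio by exact Hw.
      rewrite (window_succ (S k)), (window_succ k), (z_succ_Rmap k), <- Rpow_mult_distr.
      f_equal. field. split; [nra | exact Hk].
Qed.

End Realization.

Theorem lemma2p2 (d : nat) (a b c : R) :
  (2 <= d)%nat -> inI a b c ->
  inI (phi1 d a b c) (phi2 d a b c) (phi3 d a b c) /\
  (forall x : nat -> R, inS a b c x ->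
     inS (phi1 d a b c) (phi2 d a b c) (phi3 d a b c) (psi d x)).
Proof.
  intros Hd HI. split; [exact (phi_inI d a b c HI)|].
  intros x (Hx & Hx1 & Hx2).
  destruct (psi_bounds d a b c x HI Hx1 Hx2) as [Hpsi1 Hpsi2].
  split; [|split; assumption].
  destruct Hx as (z & ((Hz_ge0 & Hz_series) & Hz_sym & Hz_int) & <-).
  exists (Fmap d z). split.
  - apply Fmap_inE; assumption || lia.
  - apply Rmap_Fmap; assumption || lia.
Qed.
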